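(* Let $D$ be a regular $(v,k,\lambda,\mu)$-PDS in a finite group $G$ with $0<\mu<k$ and $\sqrt\Delta\in\mathbb{Z}$, and let $\alpha\in\{1,2\}$. If some nonprincipal linear character of $G$ has order dividing $\pi_\alpha$, then every linear character of $G$ whose order is coprime to $\sqrt\Delta$ has order dividing $\pi_\alpha$.
   Context: A $(v,k,\lambda,\mu)$-PDS in a group $G$ of order $v$ is a $k$-subset $D$ such that every nonidentity element of $D$ is $xy^{-1}$ ($x,y\in D$) in exactly $\lambda$ ways and every nonidentity element of $G\setminus D$ in exactly $\mu$ ways; regular means $D=D^{(-1)}$ and $1\notin D$. $\Delta=(\lambda-\mu)^2+4(k-\mu)$, $\theta_{1,2}=\frac12(\lambda-\mu\pm\sqrt\Delta)$. Every prime $p$ dividing $v$ but not $\sqrt\Delta$ divides exactly one of $k-\theta_1$, $k-\theta_2$. For $i\in\{1,2\}$, $\Pi_i$ is the set of primes $p$ with $p\mid v$, $p\nmid\sqrt\Delta$ and $p\mid k-\theta_i$, and $\pi_i=\prod_{p\in\Pi_i}p^{e_p}$ where $p^{e_p}$ is the exact power of $p$ dividing $v$. $\chi(D)=\sum_{d\in D}\chi(d)$. *)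

From HB Require Import structures.
From mathcomp Require Import all_boot all_order all_algebra all_fingroup all_solvable all_field all_character.
Set Implicit Arguments. Unset Strict Implicit. Unset Printing Implicit Defensive.
Import Order.TTheory GRing.Theory Num.Theory.

Definition pds_count (gT : finGroupType) (D : {set gT}) (g : gT) : nat :=
  #|[set p : gT * gT | [&& p.1 \in D, p.2 \in D & (p.1 * p.2^-1)%g == g]]|.

Definition is_PDS (gT : finGroupType) (G : {group gT}) (D : {set gT})
    (v k lam mu : nat) : Prop :=
  [/\ #|G| = v, D \subset G, #|D| = k &
      forall g, g \in G -> g != 1%g ->
        (g \in D -> pds_count D g = lam) /\ (g \notin D -> pds_count D g = mu)].

Definition regular_PDS (gT : finGroupType) (D : {set gT}) : Prop :=
  [set x^-1 | x in D]%g = D /\ (1%g \notin D).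

Definition pds_Delta (k lam mu : nat) : int :=
  ((lam%:Z - mu%:Z) ^+ 2 + 4 * (k%:Z - mu%:Z))%R.

(* theta_1 = (lam - mu + s)/2, theta_2 = (lam - mu - s)/2, where s = sqrt Delta
   (an integer; lam - mu and s have the same parity, so the division is exact). *)
Definition pds_theta (alpha : nat) (lam mu s : nat) : int :=
  if alpha == 1%N then ((lam%:Z - mu%:Z + s%:Z) %/ 2)%Z
  else ((lam%:Z - mu%:Z - s%:Z) %/ 2)%Z.

Definition pds_Pi (alpha v k lam mu s : nat) : nat_pred :=
  [pred p | [&& prime p, p %| v, ~~ (p %| s) &
             ((p%:Z) %| (k%:Z - pds_theta alpha lam mu s)%R)%Z]].

Definition pds_pi (alpha v k lam mu s : nat) : nat :=
  v`_(pds_Pi alpha v k lam mu s).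

From HB Require Import structures.
From mathcomp Require Import all_boot all_order all_algebra all_fingroup all_solvable all_field all_character.
Set Implicit Arguments. Unset Strict Implicit. Unset Printing Implicit Defensive.
Import Order.TTheory GRing.Theory Num.Theory.
From mathcomp Require Import ring zify.

(* For a nonprincipal linear character xi, counting the quotients x y^-1 of
   elements of D gives xi(D)^2 = (lam - mu) xi(D) + (k - mu), so xi(D) is theta_1
   or theta_2.  If beta has prime order p and the order of phi is prime to p, a
   Galois automorphism fixing the values of phi and moving beta to its powers
   shows phi(D) = (phi beta)(D) mod p; for phi = 1 this gives p | k - beta(D).
   As theta_1 - theta_2 = sqrt Delta, a prime p not dividing sqrt Delta lies in
   Pi_i exactly when beta(D) = theta_i, and for characters phi, beta of distinct
   such prime orders q, p we get phi(D) = (phi beta)(D) = beta(D).  Hence all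
   these primes lie in the same Pi_i. *)

Local Open Scope ring_scope.

Section LinearChars.

Variables (gT : finGroupType) (G : {group gT}).

Lemma lin_char_sum_eq0 (xi : 'CF(G)) :
  xi \is a linear_char -> xi != 1 -> \sum_(g in G) xi g = 0.
Proof.
move=> Lxi nt1; have /irrP[i Dxi] := lin_char_irr Lxi.
have i_nz : i != 0 by apply: contra nt1 => /eqP i0; rewrite Dxi i0 irr0.
have := cfdot_irr i 0; rewrite (negPf i_nz) -Dxi irr0 cfdotE.
rewrite (eq_bigr xi) => [/eqP|x Gx]; last by rewrite cfun1E Gx conjC1 mulr1.
by rewrite mulf_eq0 invr_eq0 pnatr_eq0 (negPf (lt0n_neq0 (cardG_gt0 G))) => /eqP.
Qed.

Lemma cforder_cfun1 : #[1 : 'CF(G)]%CF = 1%N.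
Proof. by apply/eqP; rewrite -dvdn1 dvdn_cforder expr1. Qed.

Lemma cforder_prime_neq1 (phi : 'CF(G)) p : prime p -> #[phi]%CF = p -> phi != 1.
Proof.
by move=> pr_p ophi; apply: contraTneq pr_p => phi1; rewrite -ophi phi1 cforder_cfun1.
Qed.

Lemma lin_char_prime_order (xi : 'CF(G)) p :
  xi \is a linear_char -> prime p -> (p %| #[xi]%CF)%N ->
  exists2 be : 'CF(G), be \is a linear_char & #[be]%CF = p.
Proof.
move=> Lxi pr_p p_dv; set n := #[xi]%CF in p_dv.
have n_gt0 : (0 < n)%N := cforder_lin_char_gt0 Lxi.
have np_gt0 : (0 < n %/ p)%N by rewrite divn_gt0 ?prime_gt0 // dvdn_leq.
exists (xi ^+ (n %/ p)); first exact: rpredX.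
have o_dv_p : (#[xi ^+ (n %/ p)]%CF %| p)%N.
  by rewrite dvdn_cforder -exprM divnK // exp_cforder.
have o_neq1 : #[xi ^+ (n %/ p)]%CF != 1%N.
  apply: contraTneq (ltn_Pdiv (prime_gt1 pr_p) n_gt0) => o1.
  rewrite -leqNgt; apply: dvdn_leq np_gt0 _.
  by rewrite dvdn_cforder -(expr1 (xi ^+ _)) -dvdn_cforder o1.
exact: (prime_nt_dvdP pr_p o_neq1 o_dv_p).
Qed.

Lemma lin_charM_neq1 (al be : 'CF(G)) p :
  prime p -> #[be]%CF = p -> coprime #[al]%CF p -> al * be != 1.
Proof.
move=> pr_p obe co_al; apply: contraTneq co_al => albe1.
have: (p %| #[al]%CF)%N.
  have albeX : (al * be) ^+ #[al]%CF = be ^+ #[al]%CF.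
    by rewrite exprMn exp_cforder mul1r.
  by rewrite -obe dvdn_cforder -albeX albe1 expr1n.
by rewrite coprime_sym prime_coprime // negbK.
Qed.

End LinearChars.

Section LinCharSumCongruence.

Variables (gT : finGroupType) (G : {group gT}) (D : {set gT}) (al be : 'CF(G)).
Variable p : nat.
Hypotheses (sDG : D \subset G) (La : al \is a linear_char).
Hypotheses (pr_p : prime p) (obe : #[be]%CF = p) (co_al_p : coprime #[al]%CF p).

Let al_unity d : d \in G -> al d ^+ #[al]%CF = 1.
Proof. by move=> Gd; rewrite -exp_cfunE // exp_cforder cfun1E Gd. Qed.

Let be_unity d : d \in G -> be d ^+ p = 1.
Proof. by move=> Gd; rewrite -obe -exp_cfunE // exp_cforder cfun1E Gd. Qed.

(* An automorphism of algC fixing the values of al and raising the p-th roots of unity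
   to the j-th power maps (al * be)(D) to (al * be^j)(D), and fixes the integer c. *)
Lemma sum_lin_charMX (c : int) j : (0 < j < p)%N ->
  \sum_(d in D) (al * be) d = c%:~R -> \sum_(d in D) (al * be ^+ j) d = c%:~R.
Proof.
case/andP=> j_gt0 j_lt_p sum_c; set e := #[al]%CF.
have co_e_p : coprime e p := co_al_p.
set m := chinese e p 1 j.
have m_mod_e : (m = 1 %[mod e])%N := chinese_modl co_e_p 1 j.
have m_mod_p : (m = j %[mod p])%N := chinese_modr co_e_p 1 j.
have co_m : coprime m (e * p).
  rewrite coprimeMr -coprime_modl m_mod_e coprime_modl coprime1n /=.
  by rewrite -coprime_modl m_mod_p coprime_modl coprime_sym prime_coprime // gtnNdvd.
have [u uE] := Qn_aut_exists co_m.
rewrite -(rmorph_int u) -sum_c rmorph_sum; apply: eq_bigr => d Dd.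
have Gd := subsetP sDG d Dd.
rewrite [(al * be) d]cfunE uE; last first.
  by rewrite exprMn exprM al_unity // mulnC exprM be_unity // !expr1n mulr1.
rewrite cfunE exp_cfunE // exprMn.
rewrite -(expr_mod m (al_unity Gd)) m_mod_e (expr_mod 1 (al_unity Gd)) expr1.
by rewrite -(expr_mod m (be_unity Gd)) m_mod_p (expr_mod j (be_unity Gd)).
Qed.

Lemma sum_lin_charMX_avg :
  \sum_(j < p) \sum_(d in D) (al * be ^+ j) d = p%:R * \sum_(d in D | be d == 1) al d.
Proof.
rewrite exchange_big big_mkcondr mulr_sumr; apply: eq_bigr => d Dd /=.
have Gd := subsetP sDG d Dd.
under eq_bigr do rewrite cfunE exp_cfunE //.
rewrite -mulr_sumr; have [->|be_neq1] := eqVneq (be d) 1.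
  by under eq_bigr do rewrite expr1n; rewrite sumr_const card_ord mulrC.
have: (be d - 1) * \sum_(i < p) be d ^+ i = 0 by rewrite -subrX1 be_unity ?subrr.
move/eqP; rewrite mulf_eq0 subr_eq0 (negPf be_neq1) /= => /eqP->.
by rewrite !mulr0.
Qed.

Lemma lin_char_sum_congr (a c : int) :
  \sum_(d in D) al d = a%:~R -> \sum_(d in D) (al * be) d = c%:~R ->
  (p%:Z %| a - c)%Z.
Proof.
move=> sum_a sum_c; have p_gt0 := prime_gt0 pr_p.
set y := \sum_(d in D | be d == 1) al d.
(* p y = a + (p - 1) c makes the algebraic integer y rational, hence an integer. *)
have y_Aint : y \in Aint by apply: rpred_sum => d _; apply/Aint_char/lin_charW.
have py : ((a + c * p.-1%:Z)%:~R : algC) = p%:R * y.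
  rewrite -sum_lin_charMX_avg (bigD1 (Ordinal p_gt0)) //= expr0 mulr1 sum_a.
  rewrite intrD intrM; congr (_ + _).
  rewrite (eq_bigr (fun _ => c%:~R)) => [|j j_neq0]; last first.
    by apply: sum_lin_charMX sum_c; rewrite ltn_ord lt0n andbT -val_eqE in j_neq0 *.
  by rewrite sumr_const cardC1 card_ord mulr_natr.
have y_Crat : y \in Crat.
  have p_neq0 : p%:R != 0 :> algC by rewrite pnatr_eq0 -lt0n.
  by rewrite -(mulKf p_neq0 y) -py rpredM ?rpredV ?rpred_int ?rpred_nat.
have /intrP[t yt] := Cint_rat_Aint y_Crat y_Aint.
move: py; rewrite yt -[p%:R]/((p%:Z)%:~R) -intrM predn_int // => /intr_inj py.
by apply/dvdzP; exists (t - c); lia.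
Qed.

End LinCharSumCongruence.

Lemma dvdz2_add_of_sqr (a s c : int) : s ^+ 2 = a ^+ 2 + 4 * c -> (2 %| a + s)%Z.
Proof.
rewrite !expr2 => sq_eq; apply/dvdzP; exists ((a + s) %/ 2)%Z.
have := divz_eq (a + s) 2; have := modz_ge0 (a + s) (isT : (2 : int) != 0).
have := ltz_pmod (a + s) (isT : (0 : int) < 2).
set r := ((a + s) %% 2)%Z; set q := ((a + s) %/ 2)%Z; nia.
Qed.

Section Theta.

Variables (k lam mu s : nat).
Hypothesis sqr_s : (s%:Z ^+ 2)%R = pds_Delta k lam mu.

Let theta1 := pds_theta 1 lam mu s.
Let theta2 := pds_theta 2 lam mu s.

Lemma pds_theta_double :
  theta1 * 2 = lam%:Z - mu%:Z + s%:Z /\ theta2 * 2 = lam%:Z - mu%:Z - s%:Z.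
Proof.
move: sqr_s; rewrite /pds_Delta => sqr_s'.
split; apply: divzK; first exact: dvdz2_add_of_sqr sqr_s'.
by apply: (@dvdz2_add_of_sqr _ _ (k%:Z - mu%:Z)); rewrite sqrrN.
Qed.

Lemma pds_theta_sub : theta1 - theta2 = s%:Z.
Proof. by have [] := pds_theta_double; lia. Qed.

Lemma pds_theta_add_mul :
  theta1 + theta2 = lam%:Z - mu%:Z /\ theta1 * theta2 = mu%:Z - k%:Z.
Proof. move: sqr_s; rewrite /pds_Delta; have [] := pds_theta_double; nia. Qed.

Definition is_pds_theta (x : int) := x = theta1 \/ x = theta2.

Lemma pds_theta_is_theta alpha : is_pds_theta (pds_theta alpha lam mu s).
Proof. by rewrite /is_pds_theta /theta1 /theta2 /pds_theta; case: eqP; [left|right]. Qed.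

Lemma is_pds_theta_root (X : algC) :
  X ^+ 2 = (lam%:R - mu%:R) * X + (k%:R - mu%:R) ->
  exists2 x, X = x%:~R & is_pds_theta x.
Proof.
have [add_theta mul_theta] := pds_theta_add_mul.
have -> : lam%:R - mu%:R = (theta1 + theta2)%:~R :> algC by rewrite add_theta intrB.
have -> : k%:R - mu%:R = - (theta1 * theta2)%:~R :> algC by rewrite mul_theta intrB opprB.
move=> /eqP; rewrite -subr_eq0 intrD intrM.
have -> : X ^+ 2 - ((theta1%:~R + theta2%:~R) * X + - (theta1%:~R * theta2%:~R))
          = (X - theta1%:~R) * (X - theta2%:~R) :> algC by ring.
rewrite mulf_eq0 !subr_eq0 => /orP[]/eqP->.
  by exists theta1; last left.
by exists theta2; last right.
Qed.

Lemma is_pds_theta_congr (r : nat) (x y : int) :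
  ~~ (r %| s)%N -> is_pds_theta x -> is_pds_theta y -> (r%:Z %| x - y)%Z -> x = y.
Proof.
move=> r_ndvd_s [] -> [] -> //.
  by rewrite pds_theta_sub dvdzE (negPf r_ndvd_s).
by rewrite -opprB pds_theta_sub dvdzE abszN (negPf r_ndvd_s).
Qed.

End Theta.

Section PDSCount.

Variables (gT : finGroupType) (D : {set gT}).

Lemma pds_count1 : pds_count D 1%g = #|D|.
Proof.
have diag_inj : injective (fun x : gT => (x, x)) by move=> x y [].
rewrite /pds_count -(card_imset D diag_inj); apply: eq_card => -[x y].
rewrite inE /= divg_eq1; apply/idP/imsetP.
  by case/and3P=> Dx Dy /eqP <-; exists x.
by case=> z Dz [-> ->]; rewrite Dz eqxx.
Qed.

Lemma sum_pds_count (V : nmodType) (f : gT -> V) :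
  \sum_(x in D) \sum_(y in D) f (x * y^-1)%g = \sum_g f g *+ pds_count D g.
Proof.
rewrite pair_big (partition_big (fun p => (p.1 * p.2^-1)%g) xpredT) //=.
apply: eq_bigr => g _; rewrite -sumr_const /pds_count.
rewrite (eq_bigr (fun _ => f g)) => [|p /andP[_ /eqP <-] //].
by apply: eq_bigl => p; rewrite inE andbA.
Qed.

End PDSCount.

Section PDS.

Variables (gT : finGroupType) (G : {group gT}) (D : {set gT}) (v k lam mu : nat).
Hypotheses (pds_D : is_PDS G D v k lam mu) (reg_D : regular_PDS D).

Let sDG : D \subset G. Proof. by case: pds_D. Qed.

Lemma pds_lin_char_sum_sqr (xi : 'CF(G)) :
  xi \is a linear_char -> xi != 1 ->
  (\sum_(d in D) xi d) ^+ 2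
    = (lam%:R - mu%:R) * (\sum_(d in D) xi d) + (k%:R - mu%:R).
Proof.
have [_ _ card_D pds_cnt] := pds_D; have [inv_D D_1] := reg_D.
move=> Lxi xi_neq1; set X := \sum_(d in D) xi d.
have sum_nt : \sum_(g in G | g != 1%g) xi g = -1.
  apply/eqP; rewrite -addr_eq0 addrC -(lin_char1 Lxi) -(bigD1 _ (group1 G)) /=.
  by rewrite lin_char_sum_eq0.
have sum_D : \sum_(g | (g \in G) && (g != 1%g) && (g \in D)) xi g = X.
  apply: eq_bigl => g; have [Dg|] := boolP (g \in D); rewrite ?andbF //.
  by rewrite andbT (subsetP sDG) //=; apply: contraNneq D_1 => <-.
have sqr_X : X ^+ 2 = \sum_g xi g *+ pds_count D g.
  rewrite expr2 /X big_distrlr /= -sum_pds_count; apply: eq_bigr => x Dx.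
  rewrite -{1}inv_D big_imset /= => [|y z _ _ /invg_inj //]; apply: eq_bigr => y Dy.
  by rewrite lin_charM ?groupV ?(subsetP sDG).
rewrite sqr_X (bigID (mem G)) /= [X in _ + X]big1 => [|g /negPf nGg]; last first.
  by rewrite cfun0 ?nGg ?mul0rn.
rewrite addr0 (bigD1 1%g) //= lin_char1 // pds_count1 card_D.
rewrite (eq_bigr (fun g => mu%:R * xi g + (lam%:R - mu%:R) * (if g \in D then xi g else 0))).
  by rewrite big_split /= -!mulr_sumr -big_mkcondr sum_nt sum_D; ring.
move=> g /andP[Gg g_neq1]; have [cnt_D cnt_nD] := pds_cnt g Gg g_neq1.
by case: ifP => [/cnt_D|/negbT/cnt_nD] ->; rewrite -mulr_natl; ring.
Qed.

Variable s : nat.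
Hypothesis sqr_s : (s%:Z ^+ 2)%R = pds_Delta k lam mu.

Lemma pds_lin_char_sum_theta (xi : 'CF(G)) :
  xi \is a linear_char -> xi != 1 ->
  exists2 b, \sum_(d in D) xi d = b%:~R & is_pds_theta lam mu s b.
Proof. by move=> Lxi xi_neq1; apply/(is_pds_theta_root sqr_s)/pds_lin_char_sum_sqr. Qed.

Lemma pds_lin_char_sum_congr (be : 'CF(G)) p (b : int) :
  be \is a linear_char -> prime p -> #[be]%CF = p ->
  \sum_(d in D) be d = b%:~R -> (p%:Z %| k%:Z - b)%Z.
Proof.
have [_ _ card_D _] := pds_D; move=> Lbe pr_p obe sum_b.
have sum_1 : \sum_(d in D) (1 : 'CF(G)) d = (k%:Z)%:~R.
  rewrite (eq_bigr (fun _ => 1)) => [|d Dd]; last by rewrite cfun1E (subsetP sDG).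
  by rewrite sumr_const card_D.
apply: (lin_char_sum_congr sDG (cfun1_lin_char G) pr_p obe _ sum_1).
  by rewrite cforder_cfun1 coprime1n.
by rewrite mul1r.
Qed.

Lemma pds_Pi_lin_charE alpha (be : 'CF(G)) p :
  be \is a linear_char -> prime p -> #[be]%CF = p -> (p %| v)%N -> ~~ (p %| s)%N ->
  (p \in pds_Pi alpha v k lam mu s)
    = (\sum_(d in D) be d == (pds_theta alpha lam mu s)%:~R).
Proof.
move=> Lbe pr_p obe p_v p_s; have be_neq1 := cforder_prime_neq1 pr_p obe.
have [b sum_b theta_b] := pds_lin_char_sum_theta Lbe be_neq1.
have p_kb := pds_lin_char_sum_congr Lbe pr_p obe sum_b.
rewrite inE pr_p p_v p_s sum_b eqr_int /=; apply/idP/eqP => [p_kt|<-//].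
apply: (is_pds_theta_congr sqr_s p_s theta_b (pds_theta_is_theta lam mu s alpha)).
set t := pds_theta alpha lam mu s in p_kt *.
have -> : b - t = (k%:Z - t) - (k%:Z - b) by ring.
by rewrite rpredB.
Qed.

Lemma pds_lin_char_sum_eq (al be : 'CF(G)) p q :
  al \is a linear_char -> be \is a linear_char -> prime p -> prime q -> p != q ->
  ~~ (p %| s)%N -> ~~ (q %| s)%N -> #[al]%CF = q -> #[be]%CF = p ->
  \sum_(d in D) al d = \sum_(d in D) be d.
Proof.
move=> Lal Lbe pr_p pr_q p_neq_q p_s q_s oal obe.
have co_al_p : coprime #[al]%CF p by rewrite oal prime_coprime // dvdn_prime2 // eq_sym.
have co_be_q : coprime #[be]%CF q by rewrite obe prime_coprime // dvdn_prime2.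
have [a sum_a theta_a] := pds_lin_char_sum_theta Lal (cforder_prime_neq1 pr_q oal).
have [b sum_b theta_b] := pds_lin_char_sum_theta Lbe (cforder_prime_neq1 pr_p obe).
have albe_neq1 := lin_charM_neq1 pr_p obe co_al_p.
have [c sum_c theta_c] := pds_lin_char_sum_theta (rpredM Lal Lbe) albe_neq1.
have a_c : a = c.
  apply: (is_pds_theta_congr sqr_s p_s theta_a theta_c).
  exact: (lin_char_sum_congr sDG Lal pr_p obe co_al_p sum_a sum_c).
have b_c : b = c.
  apply: (is_pds_theta_congr sqr_s q_s theta_b theta_c).
  by apply: (lin_char_sum_congr sDG Lbe pr_q oal co_be_q sum_b); rewrite mulrC.
by rewrite sum_a sum_b a_c b_c.
Qed.

End PDS.

Local Close Scope ring_scope.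

Theorem mainTheorem8 (gT : finGroupType) (G : {group gT}) (D : {set gT})
    (v k lam mu s alpha : nat) :
  is_PDS G D v k lam mu -> regular_PDS D ->
  (0 < mu)%N -> (mu < k)%N ->
  (s%:Z ^+ 2)%R = pds_Delta k lam mu ->
  (alpha = 1%N \/ alpha = 2%N) ->
  (exists xi : 'CF(G), [/\ xi \is a linear_char, xi != 1%R &
       (#[xi]%CF %| pds_pi alpha v k lam mu s)%N]) ->
  forall xi : 'CF(G), xi \is a linear_char -> coprime #[xi]%CF s ->
    (#[xi]%CF %| pds_pi alpha v k lam mu s)%N.
Proof.
move=> pds_D reg_D _ _ sqr_s _ [xi0 [Lxi0 xi0_neq1 xi0_dvd]] xi Lxi co_xi_s.
have [card_G _ _ _] := pds_D; rewrite /pds_pi in xi0_dvd *.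
set P := pds_Pi alpha v k lam mu s in xi0_dvd *.
have xi_v : (#[xi]%CF %| v)%N by rewrite -card_G cforder_lin_char_dvdG.
have xi0_gt1 : (1 < #[xi0]%CF)%N.
  rewrite ltn_neqAle eq_sym cforder_lin_char_gt0 // andbT.
  by apply: contra xi0_neq1; rewrite -dvdn1 dvdn_cforder expr1.
set q := pdiv #[xi0]%CF; have pr_q := pdiv_prime xi0_gt1.
have q_P : q \in P.
  apply: (pnatPpi (part_pnat P v)); rewrite mem_primes pr_q part_gt0 /=.
  exact: dvdn_trans (pdiv_dvd _) xi0_dvd.
have [al Lal oal] := lin_char_prime_order Lxi0 pr_q (pdiv_dvd _).
suff P_xi : P.-nat #[xi]%CF.
  by rewrite -(part_pnat_id P_xi) partn_dvd // -card_G cardG_gt0.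
apply/pnatP => [|p pr_p p_dvd]; first exact: cforder_lin_char_gt0.
have [-> // | p_neq_q] := eqVneq p q.
have p_s : ~~ (p %| s)%N by rewrite -prime_coprime // (coprime_dvdl p_dvd co_xi_s).
have [be Lbe obe] := lin_char_prime_order Lxi pr_p p_dvd.
have /and4P[_ q_v q_s _] : [&& prime q, q %| v, ~~ (q %| s) & _] := q_P.
rewrite (pds_Pi_lin_charE pds_D reg_D sqr_s _ Lbe pr_p obe (dvdn_trans p_dvd xi_v) p_s).
rewrite -(pds_lin_char_sum_eq pds_D reg_D sqr_s Lal Lbe pr_p pr_q) //.
by rewrite -(pds_Pi_lin_charE pds_D reg_D sqr_s _ Lal pr_q oal q_v q_s).
Qed.
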